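(* Let $G$ be a graph and $k=k(G)>0$ such that every unit-weighted graph $H$ satisfies $$\mathsf{inter}^*_G(H)=\mathsf{inter}_G(H)\ge|E(H)|-k|V(H)|-k^2.$$ Then every unit-weighted graph $H$ satisfies $$\mathsf{inter}_G(H)\ge\frac1{27}\frac{|E(H)|^3}{k^2|V(H)|^2}-k|V(H)|,$$ so that $\mathsf{inter}_G$ is a $(27k^2,k)$-congestion measure.
   Context: Let $G=(V,E)$; $\mathcal P_{uv}$ is the set of paths in $G$ between $u,v$. A flow is $F:\bigcup\mathcal P_{uv}\to[0,\infty)$ with $F[u,v]=\sum_{p\in\mathcal P_{uv}}F(p)$; it is integral if for each $u,v$ it is supported on at most one path of $\mathcal P_{uv}$. $\mathsf{inter}(F)=\sum_{(u,v,u',v'):|\{u,v,u',v'\}|=4}\sum_{p\in\mathcal P_{uv},p'\in\mathcal P_{u'v'}}\sum_{x\in p\cap p'}F(p)F(p')$. For a graph $H$ with edge weights $w$, an $H$-flow in $G$ is a flow $F$ with an injective $\phi:V(H)\to V$ such that $F[\phi(u),\phi(v)]\ge w(u,v)$ for every edge $\{u,v\}\in E(H)$; unit-weighted means all weights are $1$. $\mathsf{inter}_G(H)$ (resp. $\mathsf{inter}^*_G(H)$) is the minimum of $\mathsf{inter}(F)$ over $H$-flows (resp. integral $H$-flows) $F$ in $G$. $\mathsf{inter}_G$ is a $(c,a)$-congestion measure if every unit-weighted graph $H=(V_H,E_H)$ satisfies $\mathsf{inter}_G(H)\ge\frac{|E_H|^3}{c|V_H|^2}-a|V_H|$. *)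

From HB Require Import structures.
From mathcomp Require Import all_boot all_order all_algebra.
From mathcomp Require Import classical_sets reals ereal.
Set Implicit Arguments. Unset Strict Implicit. Unset Printing Implicit Defensive.
Import Order.TTheory GRing.Theory Num.Theory.
Local Open Scope ring_scope.

(* A finite simple graph is given by a symmetric irreflexive relation [e]
   on a finite vertex type [T].  Its edge set is the set of unordered pairs. *)
Definition edges (T : finType) (e : rel T) : {set {set T}} :=
  [set [set x; y] | x in T, y in T & e x y].

Definition nverts (T : finType) := #|T|.
Definition nedges (T : finType) (e : rel T) := #|edges e|.

Definition uniq_seqs (T : finType) : seq (seq T) :=
  flatten [seq permutations (enum A) | A : {set T}].

Definition is_path (T : finType) (e : rel T) (u v : T) (p : seq T) : bool :=
  match p with
  | [::] => false
  | x :: q => [&& x == u, last x q == v, path e x q & uniq p]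
  end.

(* P_uv : the paths between u and v.  Paths are unoriented; each path between
   u and v is represented by its (unique) orientation from u to v. *)
Definition Puv (T : finType) (e : rel T) (u v : T) : seq (seq T) :=
  [seq p <- uniq_seqs T | is_path e u v p].

Section Flows.
Variables (R : realType) (T : finType) (e : rel T).

(* A flow: a nonnegative function on (unoriented) paths, i.e. a function on
   vertex sequences invariant under reversal. *)
Definition is_flow (F : seq T -> R) : Prop :=
  (forall p, 0 <= F p) /\ (forall p, F (rev p) = F p).

Definition flow_uv (F : seq T -> R) (u v : T) : R :=
  \sum_(p <- Puv e u v) F p.

Definition is_integral (F : seq T -> R) : Prop :=
  forall u v p q, p \in Puv e u v -> q \in Puv e u v ->
    F p != 0 -> F q != 0 -> p = q.

Definition inter (F : seq T -> R) : R :=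
  \sum_(u : T) \sum_(v : T) \sum_(u' : T) \sum_(v' : T)
    (if #|[set u; v; u'; v']| == 4%N then
       \sum_(p <- Puv e u v) \sum_(p' <- Puv e u' v')
         \sum_(x : T | (x \in p) && (x \in p')) F p * F p'
     else 0).

Definition is_Hflow (TH : finType) (eH : rel TH) (F : seq T -> R) : Prop :=
  is_flow F /\
  exists phi : TH -> T, injective phi /\
    forall x y, eH x y -> 1 <= flow_uv F (phi x) (phi y).

(* inter_G(H) and inter*_G(H): infima (+oo if there is no H-flow) *)
Definition interG (TH : finType) (eH : rel TH) : \bar R :=
  ereal_inf [set (inter F)%:E | F in [set F | is_Hflow eH F]]%classic.

Definition interG_star (TH : finType) (eH : rel TH) : \bar R :=
  ereal_inf [set (inter F)%:E | F in [set F | is_Hflow eH F /\ is_integral F]]%classic.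

Definition congestion_measure (c a : R) : Prop :=
  forall (TH : finType) (eH : rel TH), symmetric eH -> irreflexive eH ->
    (((nedges eH)%:R ^+ 3 / (c * (nverts TH)%:R ^+ 2)
      - a * (nverts TH)%:R)%:E <= interG eH)%E.

End Flows.

Arguments interG {R T} e {TH} eH.
Arguments interG_star {R T} e {TH} eH.
Arguments congestion_measure {R T} e c a.

(* Sample each vertex of H independently with probability p and keep only the
   flow on paths whose two endpoints are images of sampled vertices.  This is an
   H[S]-flow for the sampled set S, so the hypothesis applies to it.  In
   expectation H[S] has p^2 |E(H)| edges and p |V(H)| vertices, while every
   crossing of two paths with four distinct endpoints survives with probability
   p^4; hence p^2 |E| - k p |V| - k^2 <= p^4 inter(F).  Taking p = 3k|V|/|E|
   gives the cubic bound. *)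

From HB Require Import structures.
From mathcomp Require Import all_boot all_order all_algebra.
From mathcomp Require Import classical_sets reals ereal.
From mathcomp Require Import ring lra.
Import Order.TTheory GRing.Theory Num.Theory.
Local Open Scope ring_scope.

Section BernoulliWeight.
Variables (R : comPzRingType) (X : finType) (p : R).

Definition bernoulli_wt (f : {ffun X -> bool}) : R :=
  \prod_x (if f x then p else 1 - p).

Lemma sum_ffun_bool_prod (h : X -> bool -> R) :
  \sum_(f : {ffun X -> bool}) \prod_x h x (f x) = \prod_x (h x true + h x false).
Proof. by rewrite -bigA_distr_bigA; apply: eq_bigr => x _; rewrite big_bool. Qed.

Lemma sum_bernoulli_wt : \sum_f bernoulli_wt f = 1.
Proof.
rewrite (sum_ffun_bool_prod (fun _ b => if b then p else 1 - p)).
by apply: big1 => x _; rewrite subrKC.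
Qed.

Lemma sum_bernoulli_wt_all (A : {set X}) :
  \sum_(f : {ffun X -> bool} | [forall x in A, f x]) bernoulli_wt f = p ^+ #|A|.
Proof.
pose h x b := if b then p else if x \in A then 0 else 1 - p.
transitivity (\sum_(f : {ffun X -> bool}) \prod_x h x (f x)).
  rewrite big_mkcond; apply: eq_bigr => f _.
  have [/forall_inP fA | /forall_inPn [x xA /negbTE fx]] := boolP [forall x in A, f x].
    apply: eq_bigr => x _; rewrite /h; case fx: (f x) => //.
    by case xA: (x \in A) => //; move: (fA x xA); rewrite fx.
  by rewrite (bigD1 x) //= /h fx xA mul0r.
rewrite sum_ffun_bool_prod -prodr_const [RHS]big_mkcond.
by apply: eq_bigr => x _; rewrite /h; case: (x \in A); rewrite ?addr0 // subrKC.
Qed.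

Lemma expect_bernoulli_all (A : {set X}) (y : R) :
  \sum_f bernoulli_wt f * (if [forall x in A, f x] then y else 0) = p ^+ #|A| * y.
Proof.
rewrite -sum_bernoulli_wt_all mulr_suml [RHS]big_mkcond.
by apply: eq_bigr => f _; case: ifP; rewrite ?mulr0 ?mul0r.
Qed.

End BernoulliWeight.

Arguments bernoulli_wt {R X}.

Lemma bernoulli_wt_ge0 (R : realDomainType) (X : finType) (p : R) (f : {ffun X -> bool}) :
  0 <= p <= 1 -> 0 <= bernoulli_wt p f.
Proof.
by case/andP=> p0 p1; apply: prodr_ge0 => x _; case: (f x); rewrite ?subr_ge0.
Qed.

Lemma expect_card_selected (R : comPzRingType) (X : finType) (p : R) :
  \sum_(f : {ffun X -> bool}) bernoulli_wt p f * #|[pred x | f x]|%:R = p * #|X|%:R.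
Proof.
transitivity (\sum_x \sum_(f : {ffun X -> bool}) bernoulli_wt p f * (if f x then 1 else 0)).
  rewrite exchange_big; apply: eq_bigr => f _.
  by rewrite -mulr_sumr -big_mkcond sumr_const.
rewrite (eq_bigr (fun _ => p)) ?sumr_const ?mulr_natr // => x _.
have all1 (f : {ffun X -> bool}) : [forall y in [set x], f y] = f x.
  by apply/forall_inP/idP => [-> | fx y /set1P ->] //; rewrite set11.
by under eq_bigr do rewrite -all1; rewrite expect_bernoulli_all cards1 mulr1.
Qed.

Lemma expect_card_covered (R : comPzRingType) (X : finType) (p : R) (S : {set {set X}}) :
  \sum_(f : {ffun X -> bool}) bernoulli_wt p f * #|[set A in S | [forall x in A, f x]]|%:R =
  \sum_(A in S) p ^+ #|A|.
Proof.
transitivity (\sum_(A in S) \sum_(f : {ffun X -> bool})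
    bernoulli_wt p f * (if [forall x in A, f x] then 1 else 0)).
  rewrite exchange_big; apply: eq_bigr => f _.
  rewrite -mulr_sumr -big_mkcondr sumr_const; congr (_ * _%:R).
  by apply: eq_card => A; rewrite inE.
by apply: eq_bigr => A _; rewrite expect_bernoulli_all mulr1.
Qed.

Lemma ler_sum_exchange (R : numDomainType) (I J : finType) (w : J -> R)
    (G : J -> I -> R) (B : I -> R) :
  (forall i, \sum_j w j * G j i <= B i) -> \sum_j w j * \sum_i G j i <= \sum_i B i.
Proof.
move=> wGB; under eq_bigr do rewrite mulr_sumr.
by rewrite exchange_big; apply: ler_sum => i _.
Qed.

Lemma nedges_le_sq (T : finType) (e : rel T) : (nedges e <= #|T| ^ 2)%N.
Proof.
rewrite /nedges expnS expn1 -card_prod -cardsT.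
apply: leq_trans (leq_imset_card (fun u : T * T => [set u.1; u.2]) _).
apply: subset_leq_card; apply/fintype.subsetP => _ /imset2P [x y _ _ ->].
by apply/finset.imsetP; exists (x, y).
Qed.

Definition induced {TH : finType} (eH : rel TH) (P : pred TH) : rel {x | P x} :=
  fun x y => eH (val x) (val y).

Lemma nedges_induced_ge (TH : finType) (eH : rel TH) (P : pred TH) :
  (#|[set E in edges eH | [forall x in E, P x]]| <= nedges (induced eH P))%N.
Proof.
pose g (E : {set TH}) := [set x : {x | P x} | val x \in E].
rewrite /nedges -(card_in_imset (f := g)).
  apply: subset_leq_card; apply/fintype.subsetP => E0 /finset.imsetP [E].
  case/setIdP => /imset2P [x y _ exy ->] /forall_inP EP ->.
  apply/imset2P; exists (exist P x (EP x (set21 x y))) (exist P y (EP y (set22 x y))) => //.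
    by move: exy; rewrite !inE.
  by apply/setP => z; rewrite !inE -!(inj_eq val_inj).
move=> E1 E2 /setIdP [_ /forall_inP E1P] /setIdP [_ /forall_inP E2P] /setP gE.
apply/setP => z; have [Pz | nPz] := boolP (P z).
  by move: (gE (exist P z Pz)); rewrite !inE.
by rewrite (contraNF (E1P z) nPz) (contraNF (E2P z) nPz).
Qed.

Lemma cubic_bound_of_sample (R : realFieldType) (k m n I : R) :
  0 < k -> 0 < n -> m <= n ^+ 2 -> 3 * k * n <= m -> 0 <= I ->
  let p := 3 * k * n / m in
  p ^+ 2 * m - k * p * n - k ^+ 2 <= p ^+ 4 * I ->
  1 / 27 * (m ^+ 3 / (k ^+ 2 * n ^+ 2)) - k * n <= I.
Proof.
move=> k_gt0 n_gt0 mn km I0 p sample.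
have m_gt0 : 0 < m by apply: lt_le_trans km; rewrite !mulr_gt0.
have p4_gt0 : 0 < p ^+ 4 by rewrite exprn_gt0 // divr_gt0 // !mulr_gt0.
rewrite -(ler_pM2l p4_gt0); apply: le_trans sample.
pose A := k ^+ 2 * n ^+ 2 / m; pose B := k ^+ 5 * n ^+ 5 / m ^+ 4.
have -> : p ^+ 4 * (1 / 27 * (m ^+ 3 / (k ^+ 2 * n ^+ 2)) - k * n) = 3 * A - 81 * B.
  by rewrite /A /B /p; field; rewrite !gt_eqF.
have -> : p ^+ 2 * m - k * p * n - k ^+ 2 = 6 * A - k ^+ 2.
  by rewrite /A /p; field; rewrite gt_eqF.
have : k ^+ 2 <= A by rewrite /A -mulrA ler_peMr ?sqr_ge0 // ler_pdivlMr // mul1r.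
have : 0 <= B by rewrite /B divr_ge0 ?exprn_ge0 ?mulr_ge0 ?exprn_ge0 // ltW.
have := sqr_ge0 k; lra.
Qed.

(* The optimal sampling probability 3kn/m lies in [0, 1] only when m >= 3kn;
   for smaller m the cubic bound is negative. *)
Lemma cubic_bound_of_sampling (R : realFieldType) (k m n I : R) :
  0 < k -> 0 <= m -> 0 <= n -> m <= n ^+ 2 -> 0 <= I ->
  (forall p, 0 <= p <= 1 -> p ^+ 2 * m - k * p * n - k ^+ 2 <= p ^+ 4 * I) ->
  1 / 27 * (m ^+ 3 / (k ^+ 2 * n ^+ 2)) - k * n <= I.
Proof.
move=> k_gt0 m_ge0 n_ge0 mn I0 sample.
have [le0|bound_gt0] := leP (1 / 27 * (m ^+ 3 / (k ^+ 2 * n ^+ 2)) - k * n) 0.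
  exact: le_trans I0.
have n_gt0 : 0 < n.
  rewrite lt_def n_ge0 andbT; apply: contraTneq bound_gt0 => ->.
  by rewrite expr0n /= !mulr0 invr0 !mulr0 subr0 ltxx.
have kn_ge0 : 0 <= 3 * k * n by rewrite !mulr_ge0 // ltW.
have [km|mk] := leP (3 * k * n) m; last first.
  move: bound_gt0; apply: contraTT => _; rewrite -leNgt.
  have -> : 1 / 27 * (m ^+ 3 / (k ^+ 2 * n ^+ 2)) - k * n =
            (m ^+ 3 - (3 * k * n) ^+ 3) / (27 * k ^+ 2 * n ^+ 2).
    by field; rewrite !gt_eqF.
  rewrite pmulr_lle0 ?invr_gt0 ?mulr_gt0 ?exprn_gt0 // subr_le0.
  by rewrite lerXn2r // ltW.
apply: cubic_bound_of_sample => //; apply: sample.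
have m_gt0 : 0 < m by apply: lt_le_trans km; rewrite !mulr_gt0.
by rewrite divr_ge0 ?ler_pdivrMr ?mul1r // ltW.
Qed.

Definition inter_term {R : realType} {T : finType} (e : rel T) (F : seq T -> R)
    (u v u' v' : T) : R :=
  if #|[set u; v; u'; v']| == 4%N then
    \sum_(p <- Puv e u v) \sum_(p' <- Puv e u' v')
      \sum_(x : T | (x \in p) && (x \in p')) F p * F p'
  else 0.

Lemma interE (R : realType) (T : finType) (e : rel T) (F : seq T -> R) :
  inter e F = \sum_u \sum_v \sum_u' \sum_v' inter_term e F u v u' v'.
Proof. by []. Qed.

Lemma inter_term_ge0 (R : realType) (T : finType) (e : rel T) (F : seq T -> R) u v u' v' :
  (forall q, 0 <= F q) -> 0 <= inter_term e F u v u' v'.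
Proof.
move=> F0; rewrite /inter_term; case: ifP => // _.
by do 3 apply: sumr_ge0 => ? _; rewrite mulr_ge0.
Qed.

Lemma inter_ge0 (R : realType) (T : finType) (e : rel T) (F : seq T -> R) :
  (forall q, 0 <= F q) -> 0 <= inter e F.
Proof. by move=> F0; rewrite interE; do 4 apply: sumr_ge0 => ? _; apply: inter_term_ge0. Qed.

Section Sampling.
Context {R : realType} {T : finType} {e : rel T} {k : R}.
Hypothesis inter_lb : forall (TH : finType) (eH : rel TH), symmetric eH -> irreflexive eH ->
  (((nedges eH)%:R - k * (nverts TH)%:R - k ^+ 2)%:E <= interG e eH)%E.
Context {TH : finType} {eH : rel TH}.
Hypotheses (eH_sym : symmetric eH) (eH_irr : irreflexive eH).
Context {F : seq T -> R} {phi : TH -> T}.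
Hypotheses (F_ge0 : forall q, 0 <= F q) (F_rev : forall q, F (rev q) = F q).
Hypotheses (phi_inj : injective phi)
  (phi_flow : forall x y, eH x y -> 1 <= flow_uv e F (phi x) (phi y)).

Definition sampled (f : {ffun TH -> bool}) (t : T) := [exists a, f a && (phi a == t)].

Definition sampled_ends f (q : seq T) :=
  if q is x :: r then sampled f x && sampled f (last x r) else false.

Definition sample_flow f q := if sampled_ends f q then F q else 0.

Lemma sampled_phi f a : sampled f (phi a) = f a.
Proof.
by apply/existsP/idP => [[b /andP [fb /eqP /phi_inj <-]] | fa] //; exists a; rewrite fa eqxx.
Qed.

Lemma sampled_ends_Puv f {u v q} :
  q \in Puv e u v -> sampled_ends f q = sampled f u && sampled f v.
Proof. by case: q => [|x r]; rewrite mem_filter //= => /andP [/and4P [/eqP -> /eqP -> _ _] _]. Qed.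

Lemma sampled_ends_rev f q : sampled_ends f (rev q) = sampled_ends f q.
Proof.
case/lastP: q => [|r y] //; rewrite rev_rcons; case: r => [|x r] //=.
by rewrite rev_cons !last_rcons andbC.
Qed.

Lemma sample_flow_Hflow (f : {ffun TH -> bool}) :
  is_Hflow e (induced eH f) (sample_flow f).
Proof.
split; first split.
- by move=> q; rewrite /sample_flow; case: ifP.
- by move=> q; rewrite /sample_flow sampled_ends_rev F_rev.
exists (phi \o val); split; first by move=> x y /phi_inj /val_inj.
move=> x y exy; rewrite /flow_uv (eq_big_seq F) ?phi_flow // => q qP.
by rewrite /sample_flow (sampled_ends_Puv f qP) !sampled_phi (valP x) (valP y).
Qed.

Lemma inter_sample_flow_ge (f : {ffun TH -> bool}) :
  #|[set E in edges eH | [forall x in E, f x]]|%:R - k * #|[pred x | f x]|%:R - k ^+ 2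
    <= inter e (sample_flow f).
Proof.
have lb := @inter_lb _ (induced eH f) (fun x y => eH_sym _ _) (fun x => eH_irr _).
have ub : (interG e (induced eH f) <= (inter e (sample_flow f))%:E)%E.
  by apply: ereal_inf_lbound; exists (sample_flow f) => //; apply: sample_flow_Hflow.
move: (le_trans lb ub); rewrite lee_fin; apply: le_trans.
by rewrite /nverts card_sig !lerD2r ler_nat nedges_induced_ge.
Qed.

Lemma inter_term_sample_flow f u v u' v' :
  inter_term e (sample_flow f) u v u' v' =
  if [&& sampled f u, sampled f v, sampled f u' & sampled f v']
  then inter_term e F u v u' v' else 0.
Proof.
rewrite /inter_term; case: ifP => _; last by case: ifP.
transitivity (\sum_(q <- Puv e u v) \sum_(q' <- Puv e u' v')
   \sum_(x | (x \in q) && (x \in q'))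
   (if sampled f u && sampled f v then F q else 0) *
   (if sampled f u' && sampled f v' then F q' else 0)).
  apply: eq_big_seq => q qP; apply: eq_big_seq => q' q'P; apply: eq_bigr => x _.
  by rewrite /sample_flow (sampled_ends_Puv f qP) (sampled_ends_Puv f q'P).
case: (sampled f u); case: (sampled f v); case: (sampled f u'); case: (sampled f v') => //=;
by do 3 (rewrite big1 // => ? _); rewrite ?mulr0 ?mul0r.
Qed.

(* Terms whose endpoints are not all in the image of phi vanish under sampling;
   the others need four distinct sampled vertices of H. *)
Lemma expect_inter_term_le (p : R) u v u' v' : 0 <= p ->
  \sum_f bernoulli_wt p f * inter_term e (sample_flow f) u v u' v'
    <= p ^+ 4 * inter_term e F u v u' v'.
Proof.
move=> p0; under eq_bigr do rewrite inter_term_sample_flow.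
have [|not_img] := boolP [&& [exists a, phi a == u], [exists a, phi a == v],
                           [exists a, phi a == u'] & [exists a, phi a == v']].
  case/and4P => /existsP [a /eqP <-] /existsP [b /eqP <-].
  move=> /existsP [a' /eqP <-] /existsP [b' /eqP <-].
  have distinct_img : #|[set phi a; phi b; phi a'; phi b']| = #|[set a; b; a'; b']|.
    by rewrite -(card_imset _ phi_inj) !imsetU !imset_set1.
  have sampled_all (f : {ffun TH -> bool}) :
      [&& sampled f (phi a), sampled f (phi b), sampled f (phi a') & sampled f (phi b')] =
      [forall x in [set a; b; a'; b'], f x].
    rewrite !sampled_phi; apply/and4P/forall_inP => [[fa fb fa' fb'] x | fS].
      by rewrite !inE => /orP [/orP [/orP [] | ] | ] /eqP ->.
    by split; apply: fS; rewrite !inE eqxx ?orbT.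
  under eq_bigr do rewrite sampled_all.
  rewrite expect_bernoulli_all.
  have [/eqP -> // | card_ne4] := boolP (#|[set a; b; a'; b']| == 4%N).
  by rewrite /inter_term distinct_img (negbTE card_ne4) !mulr0.
rewrite big1; first by rewrite mulr_ge0 ?exprn_ge0 ?inter_term_ge0.
move=> f _; case: ifP; rewrite ?mulr0 // => /and4P [su sv su' sv'].
case/negP: not_img; apply/and4P.
by split; [move: su | move: sv | move: su' | move: sv'];
  case/existsP => a /andP [_ ?]; apply/existsP; exists a.
Qed.

Lemma sampling_inequality (p : R) : 0 <= p <= 1 ->
  p ^+ 2 * (nedges eH)%:R - k * p * (nverts TH)%:R - k ^+ 2 <= p ^+ 4 * inter e F.
Proof.
move=> /[dup] p01 /andP [p0 _].
have edges_card2 : \sum_(E in edges eH) p ^+ #|E| = p ^+ 2 * (nedges eH)%:R.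
  rewrite (eq_bigr (fun _ => p ^+ 2)) ?sumr_const ?mulr_natr //.
  move=> _ /imset2P [x y _ exy ->]; rewrite cards2.
  by case: eqP exy => [-> | //]; rewrite inE eH_irr.
have expect_lb : \sum_f bernoulli_wt p f *
    (#|[set E in edges eH | [forall x in E, f x]]|%:R - k * #|[pred x | f x]|%:R - k ^+ 2)
    = p ^+ 2 * (nedges eH)%:R - k * p * (nverts TH)%:R - k ^+ 2.
  transitivity (\sum_(f : {ffun TH -> bool})
      bernoulli_wt p f * #|[set E in edges eH | [forall x in E, f x]]|%:R
    - k * \sum_(f : {ffun TH -> bool}) bernoulli_wt p f * #|[pred x | f x]|%:R
    - k ^+ 2 * \sum_(f : {ffun TH -> bool}) bernoulli_wt p f).
    by rewrite !mulr_sumr -!sumrB; apply: eq_bigr => f _; ring.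
  by rewrite expect_card_covered edges_card2 expect_card_selected sum_bernoulli_wt mulr1 mulrA.
rewrite -expect_lb; apply: le_trans (_ : \sum_f bernoulli_wt p f * inter e (sample_flow f) <= _).
  by apply: ler_sum => f _; rewrite ler_wpM2l ?bernoulli_wt_ge0 ?inter_sample_flow_ge.
rewrite interE; under [X in X <= _]eq_bigr do rewrite interE.
rewrite !mulr_sumr; do 3 (apply: ler_sum_exchange => ?; rewrite !mulr_sumr).
by apply: ler_sum_exchange => v'; apply: expect_inter_term_le.
Qed.

End Sampling.

Lemma interG_ge_cubic {R : realType} {T : finType} {e : rel T} {k : R} : 0 < k ->
  (forall (TH : finType) (eH : rel TH), symmetric eH -> irreflexive eH ->
     (((nedges eH)%:R - k * (nverts TH)%:R - k ^+ 2)%:E <= interG e eH)%E) ->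
  forall (TH : finType) (eH : rel TH), symmetric eH -> irreflexive eH ->
    ((1 / 27 * ((nedges eH)%:R ^+ 3 / (k ^+ 2 * (nverts TH)%:R ^+ 2))
      - k * (nverts TH)%:R)%:E <= interG e eH)%E.
Proof.
move=> k_gt0 inter_lb TH eH eH_sym eH_irr.
apply/ereal_infP => _ [F [[F_ge0 F_rev] [phi [phi_inj phi_flow]]] <-].
rewrite lee_fin; apply: cubic_bound_of_sampling; rewrite ?ler0n //.
- by rewrite /nverts -natrX ler_nat nedges_le_sq.
- exact: inter_ge0.
- move=> p p01.
  exact (sampling_inequality inter_lb eH_sym eH_irr F_ge0 F_rev phi_inj phi_flow p p01).
Qed.

Theorem lemma3p5 (R : realType) (T : finType) (e : rel T)
  (e_sym : symmetric e) (e_irr : irreflexive e) (k : R) (k_gt0 : 0 < k)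
  (hyp : forall (TH : finType) (eH : rel TH), symmetric eH -> irreflexive eH ->
     interG_star (R:=R) e eH = interG e eH /\
     (((nedges eH)%:R - k * (nverts TH)%:R - k ^+ 2)%:E <= interG e eH)%E) :
  (forall (TH : finType) (eH : rel TH), symmetric eH -> irreflexive eH ->
     ((1 / 27 * ((nedges eH)%:R ^+ 3 / (k ^+ 2 * (nverts TH)%:R ^+ 2))
       - k * (nverts TH)%:R)%:E <= interG e eH)%E)
  /\ congestion_measure e (27 * k ^+ 2) k.
Proof.
have cubic_lb := interG_ge_cubic k_gt0 (fun TH eH eH_sym eH_irr => (hyp TH eH eH_sym eH_irr).2).
split=> // TH eH eH_sym eH_irr; move: (cubic_lb TH eH eH_sym eH_irr).
suff -> : (nedges eH)%:R ^+ 3 / (27 * k ^+ 2 * (nverts TH)%:R ^+ 2) =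
          1 / 27 * ((nedges eH)%:R ^+ 3 / (k ^+ 2 * (nverts TH)%:R ^+ 2)) :> R by [].
by rewrite !invfM; ring.
Qed.
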